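(* Let $u,w\in\mathcal B_\infty$. Then $u\le_0 w$ if and only if (1) $u(i)\ge w(i)$ for all $i>0$, and (2) whenever $0<i<j$ and $u(i)<u(j)$, we have $w(i)<w(j)$.
   Context: Write $\bar i:=-i$. $\mathcal B_n$: permutations $w$ of $\pm[n]$ with $w(\bar a)=\overline{w(a)}$; $\mathcal B_\infty=\bigcup_n\mathcal B_n$ (via fixing $\pm(n+1)$). Length $\ell(w)=\#\{(i,j):0<i<j,\ w(i)>w(j)\}+\sum_{i>0,w(i)<0}|w(i)|$. For $0<i<j$, $t_j=(\bar j,j)$, $t_{\bar ij}=(\bar j,i)(\bar i,j)$. The $0$-Bruhat order $\le_0$ is the partial order generated by covers $u\lessdot_0 w$: $\ell(w)=\ell(u)+1$ and $u^{-1}w\in\{t_j,t_{\bar ij}:0<i<j\}$. *)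

From mathcomp Require Import all_boot all_order all_algebra.
Set Implicit Arguments. Unset Strict Implicit. Unset Printing Implicit Defensive.
Import Order.TTheory GRing.Theory Num.Theory.
Local Open Scope ring_scope.

(* Signed permutations are modelled as functions int -> int.
   \bar a := -a.  Element of B_infinity: bijective, w(-a) = -w(a), and
   w fixes every a with |a| > n for some n (i.e. w lies in some B_n). *)

Definition supp_bound (n : nat) (w : int -> int) : Prop :=
  forall a : int, (n%:Z < `|a|) -> w a = a.

Definition inBinf (w : int -> int) : Prop :=
  [/\ bijective w, (forall a : int, w (- a) = - w a) & exists n, supp_bound n w].

(* Length computed inside [-N, N]; equals l(w) as soon as supp_bound N w. *)
Definition lengthN (N : nat) (w : int -> int) : nat :=
  (#|[set p : 'I_N.+1 * 'I_N.+1 |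
       [&& (0 < p.1)%N, (p.1 < p.2)%N & (w (Posz (nat_of_ord p.2)) < w (Posz (nat_of_ord p.1)))%R]]|
   + \sum_(1 <= i < N.+1 | (w (Posz i) < 0)%R) absz (w (Posz i)))%N.

Definition t_refl (j : int) : int -> int :=
  fun a => if a == j then - j else if a == - j then j else a.

Definition t_pair (i j : int) : int -> int :=
  fun a => if a == - j then i else if a == i then - j
           else if a == - i then j else if a == j then - i else a.

(* u^{-1} w = t  <->  w = u o t *)
Definition is_reflection_quot (u w : int -> int) : Prop :=
  (exists j : int, 0 < j /\ w =1 u \o t_refl j) \/
  (exists i j : int, [/\ 0 < i, i < j & w =1 u \o t_pair i j]).

Definition cover0 (u w : int -> int) : Prop :=
  [/\ inBinf u, inBinf w,
      (exists N, [/\ supp_bound N u, supp_bound N w & lengthN N w = (lengthN N u).+1])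
    & is_reflection_quot u w].

Inductive bruhat0 : (int -> int) -> (int -> int) -> Prop :=
| bruhat0_refl u w : u =1 w -> bruhat0 u w
| bruhat0_step u v w : bruhat0 u v -> cover0 v w -> bruhat0 u w.

(* Necessity.  A cover [u <.0 u t] changes [u] at one position (t = t_j) or at two
   (t = t_{\bar i j}).  Computing l(u t) - l(u) position by position shows that the length
   grows by exactly one iff no earlier position carries a value that the new, negated
   values jump over; this is what keeps (1) and (2) along a chain of covers.
   Sufficiency.  If u <> w satisfy (1) and (2), take j with w(j) < u(j) and u(j) minimal,
   then k with -u(j) < u(k), w(k) <= -u(j) and u(k) minimal; such k exists by comparing
   how many values of u and of w lie in the windows (-u(j), u(j)) and (-w(j), w(j)).
   Then v = u t_j (if k = j) or v = u t_{\bar j k} covers u, still satisfies (1) and (2)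
   with respect to w, and the sum of v(i) - w(i) over i > 0 has decreased. *)

From mathcomp Require Import all_boot all_order all_algebra zify ring.
From Stdlib Require Import FunctionalExtensionality.
Import Order.TTheory GRing.Theory Num.Theory.
Local Open Scope ring_scope.
Set Implicit Arguments. Unset Strict Implicit. Unset Printing Implicit Defensive.

Section SignedPermutations.

Variable u : int -> int.
Hypothesis Hu : inBinf u.

Lemma inBinf_inj : injective u.
Proof. by case: Hu => /bij_inj. Qed.

Lemma inBinf_odd a : u (- a) = - u a.
Proof. by case: Hu. Qed.

Lemma inBinf_surj t : exists p, u p = t.
Proof. by case: Hu => -[g _ gK] _ _; exists (g t). Qed.

Lemma inBinf0 : u 0 = 0.
Proof.
have E := inBinf_odd 0; rewrite oppr0 in E.
have : u 0 + u 0 = 0 by rewrite {1}E addNr.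
lia.
Qed.

Lemma inBinf_neq0 p : p != 0 -> u p != 0.
Proof. by rewrite -{2}inBinf0 (inj_eq inBinf_inj). Qed.

Lemma inBinf_neq_pm p q : 0 < p -> 0 < q -> p != q -> u p != u q /\ u p != - u q.
Proof.
move=> p_gt0 q_gt0 pq; rewrite -inBinf_odd !(inj_eq inBinf_inj); lia.
Qed.

Lemma inBinf_bounded N p : supp_bound N u -> `|p| <= N%:Z -> `|u p| <= N%:Z.
Proof.
move=> HN Hp; case: (lerP `|u p| N%:Z) => // Hup.
have /inBinf_inj Eup := HN _ Hup; rewrite Eup in Hup; lia.
Qed.

End SignedPermutations.

Definition ind (b : bool) : int := if b then 1 else 0.
Definition neg_part (t : int) : int := if t < 0 then - t else 0.

Definition inv_count N (f : int -> int) : int :=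
  \sum_(1 <= p < N.+1) \sum_(1 <= q < N.+1) ind ((p < q)%N && (f q%:Z < f p%:Z)).
Definition neg_sum N (f : int -> int) : int := \sum_(1 <= p < N.+1) neg_part (f p%:Z).
Definition lenZ N f := inv_count N f + neg_sum N f.

Lemma lengthNE N f : (lengthN N f)%:Z = lenZ N f.
Proof.
rewrite /lengthN PoszD !(big_morph Posz PoszD (erefl (Posz 0))); congr (_ + _).
  rewrite -sum1_card (big_morph Posz PoszD (erefl (Posz 0))) big_mkcond /=.
  set S := [set _ | _].
  transitivity (\sum_(i < N.+1) \sum_(j < N.+1) (if (i, j) \in S then 1 else 0 : int)).
    by rewrite pair_bigA; apply: eq_bigr => -[i j] _.
  under eq_bigr => i _ do under eq_bigr => j _ do rewrite inE /=.
  rewrite /inv_count -(big_mkord xpredT (fun i => \sum_(j < N.+1)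
    (if [&& (0 < i)%N, (i < j)%N & f j < f i] then 1 else 0 : int))) big_ltn // big1 ?add0r //.
  apply: eq_big_nat => i /andP[i_gt0 _].
  rewrite -(big_mkord xpredT (fun j => (if [&& (0 < i)%N, (i < j)%N & f j < f i] then 1 else 0 : int))).
  rewrite big_ltn // ltn0 andbF add0r.
  by apply: eq_big_nat => j _; rewrite /ind i_gt0.
rewrite /neg_sum big_mkcond /=; apply: eq_bigr => i _.
rewrite /neg_part; case: ifP => //; lia.
Qed.

Lemma eq_lenZ N f g : f =1 g -> lenZ N f = lenZ N g.
Proof.
move=> fg; rewrite /lenZ /inv_count /neg_sum.
by congr (_ + _); apply: eq_bigr => p _; rewrite ?fg //; apply: eq_bigr => q _; rewrite !fg.
Qed.

(* Change in the inversions between positions [j] and [k] (value [xk]) when the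
   value at [j] changes from [x0] to [y]. *)
Definition inv_change (j : nat) (y x0 : int) (k : nat) (xk : int) : int :=
  ind ((k < j)%N && (y < xk)) - ind ((k < j)%N && (x0 < xk))
  + (ind ((j < k)%N && (xk < y)) - ind ((j < k)%N && (xk < x0))).

Lemma uniq_iota1 N : uniq (index_iota 1 N.+1).
Proof. exact: iota_uniq. Qed.

Lemma lenZ_update N (f g : int -> int) (j : nat) : (1 <= j <= N)%N ->
  (forall p : nat, p != j -> g p%:Z = f p%:Z) ->
  lenZ N g - lenZ N f =
  \sum_(1 <= k < N.+1) inv_change j (g j%:Z) (f j%:Z) k (f k%:Z)
  + (neg_part (g j%:Z) - neg_part (f j%:Z)).
Proof.
move=> Hj gf.
have j_in : j \in index_iota 1 N.+1 by rewrite mem_index_iota; lia.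
rewrite /lenZ opprD addrACA; congr (_ + _); last first.
  rewrite /neg_sum (bigD1_seq j) ?uniq_iota1 //= [X in _ - X](bigD1_seq j) ?uniq_iota1 //=.
  by rewrite opprD addrACA -sumrB big1 ?addr0 // => p /gf ->; rewrite subrr.
pose row (h : int -> int) (p : nat) := \sum_(1 <= q < N.+1) ind ((p < q)%N && (h q%:Z < h p%:Z)).
have row_off p : p != j -> row g p - row f p =
    ind ((p < j)%N && (g j%:Z < f p%:Z)) - ind ((p < j)%N && (f j%:Z < f p%:Z)).
  move=> pj; rewrite /row -sumrB (bigD1_seq j) ?uniq_iota1 //= big1 ?addr0; first by rewrite (gf _ pj).
  by move=> q /gf gq; rewrite (gf _ pj) gq subrr.
have row_j : row g j - row f j = \sum_(1 <= k < N.+1)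
    (ind ((j < k)%N && (f k%:Z < g j%:Z)) - ind ((j < k)%N && (f k%:Z < f j%:Z))).
  rewrite /row -sumrB; apply: eq_bigr => k _.
  by case: (eqVneq k j) => [->|/gf ->]; rewrite ?ltnn.
rewrite /inv_count -sumrB (bigD1_seq j) ?uniq_iota1 //= row_j (eq_bigr _ row_off).
rewrite [RHS]big_split /= addrC; congr (_ + _).
by rewrite [RHS](bigD1_seq j) ?uniq_iota1 //= ltnn subrr add0r.
Qed.

(* For [t > 0] the indicator of [-t < x < t]; for [t < 0] minus that of [t <= x <= -t]. *)
Definition window (t x : int) : int := ind (- t < x) - ind (t <= x).

Lemma window_succ t x : window (t + 1) x = window t x + (ind (x == t) + ind (x == - t)).
Proof. rewrite /window /ind; repeat case: ifP; lia. Qed.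

Lemma window_opp t x : window (- t) x = - window t x - (ind (x == t) + ind (x == - t)).
Proof. rewrite /window /ind; repeat case: ifP; lia. Qed.

Lemma windowE t x : x != t -> window t x = ind (- t < x) - ind (t < x).
Proof. rewrite /window /ind; repeat case: ifP; lia. Qed.

Section Counting.

Variables (u : int -> int) (N : nat).
Hypotheses (Hu : inBinf u) (HN : supp_bound N u).

Lemma sum_ind_pm s : 0 < s -> s <= N%:Z ->
  \sum_(1 <= k < N.+1) (ind (u k%:Z == s) + ind (u k%:Z == - s)) = 1.
Proof.
move=> s_gt0 s_le; have [p up] := inBinf_surj Hu s.
have p_le : `|p| <= N%:Z.
  by case: (lerP `|p| N%:Z) => // p_gt; have := HN p_gt; lia.
have p_neq0 : p != 0 by apply: contraTneq s_gt0 => p0; rewrite -up p0 inBinf0.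
have p_in : absz p \in index_iota 1 N.+1 by rewrite mem_index_iota; lia.
have up_abs : u (absz p)%:Z = s \/ u (absz p)%:Z = - s.
  case: (ltrP 0 p) => p_sgn; [left | right].
    by rewrite gtz0_abs.
  by rewrite ltz0_abs ?(inBinf_odd Hu) ?up //; lia.
rewrite (bigD1_seq (absz p)) ?uniq_iota1 //= big1 ?addr0.
  by case: up_abs => ->; rewrite /ind; case: ifP; case: ifP; lia.
move=> k kp; rewrite /ind -up -(inBinf_odd Hu) !(inj_eq (inBinf_inj Hu)).
by case: ifP; case: ifP; lia.
Qed.

Lemma sum_window_pos (m : nat) : (m <= N)%N ->
  \sum_(1 <= k < N.+1) window (m.+1)%:Z (u k%:Z) = m%:Z.
Proof.
elim: m => [_|m IH m_lt].
  rewrite big_seq big1 // => k; rewrite mem_index_iota => k_in.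
  have : u k%:Z != 0 by apply: (inBinf_neq0 Hu); lia.
  rewrite /window /ind; repeat case: ifP; lia.
have -> : (m.+2)%:Z = (m.+1)%:Z + 1 by lia.
under eq_bigr => k _ do rewrite window_succ.
rewrite big_split /= IH ?sum_ind_pm; lia.
Qed.

Lemma sum_window t : t != 0 -> `|t| <= N%:Z ->
  \sum_(1 <= k < N.+1) window t (u k%:Z) = t - ind (0 < t).
Proof.
move=> t_neq0 t_le; case: (ltrP 0 t) => t_sgn.
  have -> : t = (absz t).-1.+1%:Z by lia.
  rewrite sum_window_pos /ind; lia.
have -> : t = - ((absz t).-1.+1%:Z) by lia.
under eq_bigr => k _ do rewrite window_opp.
rewrite sumrB sumrN sum_window_pos ?sum_ind_pm /ind /=; lia.
Qed.

End Counting.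

Lemma sum_ge0_seq (r : seq nat) (P : pred nat) (F : nat -> int) :
  (forall k, k \in r -> P k -> 0 <= F k) -> 0 <= \sum_(k <- r | P k) F k.
Proof. by move=> F_ge0; rewrite big_seq_cond sumr_ge0 // => k /andP[]; apply: F_ge0. Qed.

Lemma sum_le0_seq (r : seq nat) (P : pred nat) (F : nat -> int) :
  (forall k, k \in r -> P k -> F k <= 0) -> \sum_(k <- r | P k) F k <= 0.
Proof. by move=> F_le0; rewrite big_seq_cond sumr_le0 // => k /andP[]; apply: F_le0. Qed.

Lemma psum_eq0_seq (r : seq nat) (P : pred nat) (F : nat -> int) :
  (forall k, k \in r -> P k -> 0 <= F k) ->
  (\sum_(k <- r | P k) F k = 0 <-> forall k, k \in r -> P k -> F k = 0).
Proof.
move=> F_ge0; rewrite big_seq_cond; split; last first.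
  by move=> F0; apply: big1 => k /andP[]; apply: F0.
move/eqP; rewrite psumr_eq0 => [/allP F0 k k_in Pk|k /andP[]]; last exact: F_ge0.
by apply/eqP; have := F0 k k_in; rewrite k_in Pk.
Qed.

Lemma t_refl_fix j p : 0 < j -> 0 <= p -> p != j -> t_refl j p = p.
Proof. move=> *; rewrite /t_refl; repeat case: ifP; lia. Qed.

Lemma t_refl_id j : t_refl j j = - j.
Proof. by rewrite /t_refl eqxx. Qed.

(* Contribution of position [k] (value [x]) to [lenZ (u \o t_refl j) - lenZ u], where [a = u j]. *)
Definition refl_summand (j : nat) (a : int) (k : nat) (x : int) :=
  inv_change j (- a) a k x + window a x.

Lemma refl_summand_pos j a k x : k != j -> x != a -> x != - a -> 0 < a ->
  0 <= refl_summand j a k x /\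
  (refl_summand j a k x = 0 <-> ((k < j)%N -> ~ (- a < x /\ x < a))).
Proof.
move=> kj xa xNa a_gt0; rewrite /refl_summand /inv_change windowE //.
case: (ltngtP k j) => k_j; last by move/eqP: kj.
all: rewrite /ind /=; repeat case: ifP; move=> *; split; try lia; split; lia.
Qed.

Lemma refl_summand_neg j a k x : k != j -> x != a -> x != - a -> a < 0 ->
  refl_summand j a k x <= 0.
Proof.
move=> kj xa xNa a_lt0; rewrite /refl_summand /inv_change windowE //.
case: (ltngtP k j) => k_j; last by move/eqP: kj.
all: rewrite /ind /=; repeat case: ifP; move=> *; lia.
Qed.

Lemma refl_summand_id j a : a != 0 -> refl_summand j a j a = ind (0 < a) - 1.
Proof. move=> a_neq0; rewrite /refl_summand /inv_change /window ltnn /ind /=; repeat case: ifP; lia. Qed.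

Section ReflectionLength.

Variables (u : int -> int) (N : nat).
Hypotheses (Hu : inBinf u) (HN : supp_bound N u).

Lemma lenZ_refl (j : nat) : (1 <= j <= N)%N ->
  lenZ N (u \o t_refl j%:Z) - lenZ N u =
  ind (0 < u j%:Z) + \sum_(1 <= k < N.+1) refl_summand j (u j%:Z) k (u k%:Z).
Proof.
move=> j_in.
rewrite (@lenZ_update N u (u \o t_refl j%:Z) j j_in); last first.
  by move=> p pj /=; rewrite t_refl_fix //; lia.
rewrite /= t_refl_id (inBinf_odd Hu).
have a_neq0 : u j%:Z != 0 by apply: (inBinf_neq0 Hu); lia.
have a_le : `|u j%:Z| <= N%:Z by apply: (inBinf_bounded Hu HN); lia.
rewrite /refl_summand [in RHS]big_split /= (sum_window Hu HN a_neq0 a_le) /neg_part.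
set S := \sum_(1 <= k < N.+1) _; rewrite /ind; repeat case: ifP; lia.
Qed.

Lemma inBinf_neq_pm_nat (k j : nat) : (1 <= k)%N -> (1 <= j)%N -> k != j ->
  u k%:Z != u j%:Z /\ u k%:Z != - u j%:Z.
Proof. move=> *; apply: (inBinf_neq_pm Hu); lia. Qed.

Lemma lenZ_refl_succ (j : nat) : (1 <= j <= N)%N ->
  (lenZ N (u \o t_refl j%:Z) = lenZ N u + 1 <->
   0 < u j%:Z /\ forall k : nat, (1 <= k)%N -> (k < j)%N -> ~ (- u j%:Z < u k%:Z /\ u k%:Z < u j%:Z)).
Proof.
move=> j_in; have D := lenZ_refl j_in.
have j_mem : j \in index_iota 1 N.+1 by rewrite mem_index_iota; lia.
have a_neq0 : u j%:Z != 0 by apply: (inBinf_neq0 Hu); lia.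
rewrite (bigD1_seq j) ?uniq_iota1 //= refl_summand_id // in D.
set a := u j%:Z in D a_neq0 *; set S := \sum_(1 <= i < N.+1 | i != j) _ in D.
have other k : k \in index_iota 1 N.+1 -> k != j -> u k%:Z != a /\ u k%:Z != - a.
  by rewrite mem_index_iota => k_in kj; apply: inBinf_neq_pm_nat => //; lia.
case: (ltrP 0 a) => a_sgn; last first.
  have : S <= 0.
    apply: sum_le0_seq => k k_in kj; have [xa xNa] := other k k_in kj.
    by apply: refl_summand_neg => //; lia.
  move: D; rewrite /ind; case: ifP => *; split => H; exfalso; try case: H; lia.
have S_ge0 k : k \in index_iota 1 N.+1 -> k != j -> 0 <= refl_summand j a k (u k%:Z).
  by move=> k_in kj; have [xa xNa] := other k k_in kj; case: (refl_summand_pos kj xa xNa a_sgn).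
have S0 := psum_eq0_seq S_ge0; rewrite -/S in S0.
split=> [len_succ | [_ no_mid]].
  split=> // k k_ge1 k_lt; have k_in : k \in index_iota 1 N.+1 by rewrite mem_index_iota; lia.
  have kj : k != j by lia.
  have [xa xNa] := other k k_in kj.
  apply: (proj1 (proj2 (refl_summand_pos kj xa xNa a_sgn))) => //; apply: (proj1 S0) => //.
  by move: D; rewrite /ind a_sgn len_succ /=; lia.
suff : S = 0 by move: D; rewrite /ind a_sgn /=; lia.
apply/S0 => k k_in kj; have [xa xNa] := other k k_in kj.
apply: (proj2 (proj2 (refl_summand_pos kj xa xNa a_sgn))) => k_lt.
by apply: no_mid => //; move: k_in; rewrite mem_index_iota; lia.
Qed.

End ReflectionLength.

Section PairReflection.

Variables i j : int.
Hypotheses (i_gt0 : 0 < i) (j_gt0 : 0 < j) (ij : i != j).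

Lemma t_pair_fix p : 0 <= p -> p != i -> p != j -> t_pair i j p = p.
Proof. move=> *; rewrite /t_pair; repeat case: ifP; lia. Qed.

Lemma t_pair_l : t_pair i j i = - j.
Proof. rewrite /t_pair; repeat case: ifP; lia. Qed.

Lemma t_pair_r : t_pair i j j = - i.
Proof. rewrite /t_pair; repeat case: ifP; lia. Qed.

Lemma t_pairC : t_pair i j =1 t_pair j i.
Proof. move=> x; rewrite /t_pair; repeat case: ifP; lia. Qed.

End PairReflection.

(* Contribution of position [k] (value [x]) to [lenZ (u \o t_pair i j) - lenZ u],
   where [a = u i] and [b = u j]. *)
Definition pair_summand (i j : nat) (a b : int) (k : nat) (x : int) :=
  inv_change i (- b) a k x + inv_change j (- a) b k x + window a x + window b x.

Ltac case_cmp4 x a b := case: (ltgtP x a) => ?; case: (ltgtP x (- a)) => ?;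
  case: (ltgtP x b) => ?; case: (ltgtP x (- b)) => ?.

Section PairSummand.

Variables (i j k : nat) (a b x : int).
Hypotheses (ij : (i < j)%N) (ki : k != i) (kj : k != j).
Hypotheses (xa : x != a) (xNa : x != - a) (xb : x != b) (xNb : x != - b).

Lemma pair_summand_mixed : 0 < a + b -> a < 0 \/ b < 0 ->
  0 <= pair_summand i j a b k x /\
  (pair_summand i j a b k x = 0 <->
   (((k < i)%N -> ~ (- b < x /\ x < a) /\ ~ (- a < x /\ x < b)) /\
    ((i < k)%N -> (k < j)%N -> ~ (- a < x /\ x < b)))).
Proof.
move=> ab_gt0 a_b; rewrite /pair_summand /inv_change !windowE //.
case: (ltngtP k i) => k_i; last by move/eqP: ki.
all: case: (ltngtP k j) => k_j; last by move/eqP: kj.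
all: try (exfalso; lia).
all: case_cmp4 x a b; rewrite /ind /=; try lia.
all: split; try lia; split; lia.
Qed.

Lemma pair_summand_pos : 0 < a -> 0 < b -> 0 <= pair_summand i j a b k x.
Proof.
move=> a_gt0 b_gt0; rewrite /pair_summand /inv_change !windowE //.
case: (ltngtP k i) => k_i; last by move/eqP: ki.
all: case: (ltngtP k j) => k_j; last by move/eqP: kj.
all: try (exfalso; lia).
all: case_cmp4 x a b; rewrite /ind /=; lia.
Qed.

Lemma pair_summand_neg : a + b < 0 -> pair_summand i j a b k x <= 0.
Proof.
move=> ab_lt0; rewrite /pair_summand /inv_change !windowE //.
case: (ltngtP k i) => k_i; last by move/eqP: ki.
all: case: (ltngtP k j) => k_j; last by move/eqP: kj.
all: try (exfalso; lia).
all: case_cmp4 x a b; rewrite /ind /=; lia.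
Qed.

End PairSummand.

Lemma pair_summand_corner (i j : nat) a b : (i < j)%N -> a != 0 -> b != 0 -> a != b -> a != - b ->
  inv_change i (- b) a i a + inv_change j (- a) b i (- b) + window a a + window b a
  + pair_summand i j a b j b =
  ind (0 < a) + ind (0 < b) - 3 + 2 * ind (0 < a + b).
Proof.
move=> ij a_neq0 b_neq0 ab aNb; rewrite /pair_summand /inv_change /window !ltnn ij.
have -> : (j < i)%N = false by lia.
rewrite /= !lexx.
have -> : (- a < - b) = (b < a) by apply/idP/idP; lia.
have -> : (b < - b) = ~~ (0 < b) by apply/idP/idP; lia.
have -> : (- a < a) = (0 < a) by apply/idP/idP; lia.
have -> : (- b < a) = (0 < a + b) by apply/idP/idP; lia.
have -> : (b <= a) = (b < a) by apply/idP/idP; lia.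
have -> : (- a < b) = (0 < a + b) by apply/idP/idP; lia.
have -> : (a <= b) = ~~ (b < a) by apply/idP/idP; lia.
have -> : (- b < b) = (0 < b) by apply/idP/idP; lia.
by rewrite /ind; case: (0 < a); case: (0 < b); case: (b < a); case: (0 < a + b).
Qed.

Lemma bigD1_seq_cond (r : seq nat) (P : pred nat) j (F : nat -> int) :
  j \in r -> uniq r -> P j ->
  \sum_(k <- r | P k) F k = F j + \sum_(k <- r | P k && (k != j)) F k.
Proof.
move=> j_in r_uniq Pj; rewrite -big_filter (bigD1_seq j) ?filter_uniq ?mem_filter ?Pj //.
by rewrite big_filter_cond.
Qed.

Section PairLength.

Variables (u : int -> int) (N : nat).
Hypotheses (Hu : inBinf u) (HN : supp_bound N u).

Lemma lenZ_pair (i j : nat) : (1 <= i)%N -> (i < j)%N -> (j <= N)%N ->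
  lenZ N (u \o t_pair i%:Z j%:Z) - lenZ N u =
  2 * ind (0 < u i%:Z) + 2 * ind (0 < u j%:Z) - 3 + 2 * ind (0 < u i%:Z + u j%:Z) +
  \sum_(1 <= k < N.+1 | (k != i) && (k != j)) pair_summand i j (u i%:Z) (u j%:Z) k (u k%:Z).
Proof.
move=> i_ge1 ij j_le; set a := u i%:Z; set b := u j%:Z.
have i_gt0 : 0 < i%:Z by lia.
have j_gt0 : 0 < j%:Z by lia.
have ij' : i%:Z != j%:Z by lia.
have a_neq0 : a != 0 by apply: (inBinf_neq0 Hu); lia.
have b_neq0 : b != 0 by apply: (inBinf_neq0 Hu); lia.
have [ab aNb] : a != b /\ a != - b by apply: inBinf_neq_pm_nat => //; lia.
(* [t_pair i j] is performed as two single-value updates: first at [i], then at [j]. *)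
pose u1 p := if p == i%:Z then - b else u p.
have u1_off p : p != i -> u1 p%:Z = u p%:Z by move=> pi; rewrite /u1 ifF //; apply/negbTE; lia.
have u1_i : u1 i%:Z = - b by rewrite /u1 eqxx.
have v_off p : p != j -> (u \o t_pair i%:Z j%:Z) p%:Z = u1 p%:Z.
  move=> pj /=; case: (eqVneq p i) => [->|pi]; first by rewrite t_pair_l // (inBinf_odd Hu) u1_i.
  by rewrite t_pair_fix ?u1_off //; lia.
have i_range : (1 <= i <= N)%N by lia.
have j_range : (1 <= j <= N)%N by lia.
have step1 := lenZ_update i_range u1_off.
have step2 := lenZ_update j_range v_off.
rewrite u1_i -/a in step1.
rewrite /= t_pair_r // (inBinf_odd Hu) -/a u1_off -/b in step2; last by lia.
pose F k := inv_change i (- b) a k (u k%:Z).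
pose G k := inv_change j (- a) b k (u1 k%:Z).
pose H k := window a (u k%:Z) + window b (u k%:Z).
have sum_H : \sum_(1 <= k < N.+1) H k = a - ind (0 < a) + (b - ind (0 < b)).
  rewrite big_split /= !(sum_window Hu HN) //; apply: (inBinf_bounded Hu HN); lia.
have i_in : i \in index_iota 1 N.+1 by rewrite mem_index_iota; lia.
have j_in : j \in index_iota 1 N.+1 by rewrite mem_index_iota; lia.
have FGH_j : F j + G j + H j = pair_summand i j a b j b.
  by rewrite /F /G /H /pair_summand u1_off -/b ?addrA //; lia.
have sum_FGH : \sum_(1 <= k < N.+1) (F k + G k + H k) =
    ind (0 < a) + ind (0 < b) - 3 + 2 * ind (0 < a + b) +
    \sum_(1 <= k < N.+1 | (k != i) && (k != j)) pair_summand i j a b k (u k%:Z).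
  rewrite [LHS](bigD1_seq i) ?uniq_iota1 // [in LHS](bigD1_seq_cond _ j_in) ?uniq_iota1 //=; last by lia.
  have off_ij : \sum_(1 <= k < N.+1 | (k != i) && (k != j)) (F k + G k + H k) =
      \sum_(1 <= k < N.+1 | (k != i) && (k != j)) pair_summand i j a b k (u k%:Z).
    by apply: eq_bigr => k /andP[ki _]; rewrite /F /G /H /pair_summand u1_off // !addrA.
  rewrite FGH_j off_ij -(pair_summand_corner ij a_neq0 b_neq0 ab aNb) /F /G /H u1_i -/a.
  by rewrite !addrA.
have neg_parts : neg_part (- b) - neg_part a + (neg_part (- a) - neg_part b) = a + b.
  by rewrite /neg_part; repeat case: ifP; lia.
have sum_FG : \sum_(1 <= k < N.+1) (F k + G k) =
    \sum_(1 <= k < N.+1) (F k + G k + H k) - \sum_(1 <= k < N.+1) H k.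
  by rewrite [in RHS]big_split /= addrK.
rewrite -(subrKA (lenZ N u1)) addrC step1 step2 addrACA neg_parts -big_split /=.
rewrite sum_FG sum_FGH sum_H.
set S := \sum_(1 <= k < N.+1 | _) _.
lia.
Qed.

Lemma lenZ_pair_succ (i j : nat) : (1 <= i)%N -> (i < j)%N -> (j <= N)%N ->
  (lenZ N (u \o t_pair i%:Z j%:Z) = lenZ N u + 1 <->
   [/\ 0 < u i%:Z + u j%:Z, u i%:Z < 0 \/ u j%:Z < 0,
    (forall k : nat, (1 <= k)%N -> (k < i)%N ->
        ~ (- u j%:Z < u k%:Z /\ u k%:Z < u i%:Z) /\ ~ (- u i%:Z < u k%:Z /\ u k%:Z < u j%:Z)) &
    (forall k : nat, (i < k)%N -> (k < j)%N -> ~ (- u i%:Z < u k%:Z /\ u k%:Z < u j%:Z))]).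
Proof.
move=> i_ge1 ij j_le; have D := lenZ_pair i_ge1 ij j_le.
set a := u i%:Z in D *; set b := u j%:Z in D *.
set S := \sum_(1 <= k < N.+1 | _) _ in D.
have a_neq0 : a != 0 by apply: (inBinf_neq0 Hu); lia.
have b_neq0 : b != 0 by apply: (inBinf_neq0 Hu); lia.
have [ab aNb] : a != b /\ a != - b by apply: inBinf_neq_pm_nat => //; lia.
have other k : k \in index_iota 1 N.+1 -> (k != i) && (k != j) ->
    [/\ u k%:Z != a, u k%:Z != - a, u k%:Z != b & u k%:Z != - b].
  rewrite mem_index_iota => k_in /andP[ki kj].
  have [xa xNa] : u k%:Z != a /\ u k%:Z != - a by apply: inBinf_neq_pm_nat => //; lia.
  have [xb xNb] : u k%:Z != b /\ u k%:Z != - b by apply: inBinf_neq_pm_nat => //; lia.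
  by split.
case: (ltrP 0 (a + b)) => ab_sgn; last first.
  have : S <= 0.
    apply: sum_le0_seq => k k_in /[dup] kij /andP[ki kj].
    by have [xa xNa xb xNb] := other k k_in kij; apply: pair_summand_neg => //; lia.
  move: D; rewrite /ind; repeat case: ifP => ?; move=> D S_le; split=> H; try case: H; lia.
case: (boolP ((a < 0) || (b < 0))) => a_b; last first.
  have : 0 <= S.
    apply: sum_ge0_seq => k k_in /[dup] kij /andP[ki kj].
    by have [xa xNa xb xNb] := other k k_in kij; apply: pair_summand_pos => //; lia.
  move: D; rewrite /ind; repeat case: ifP => ?; move=> D S_ge; split=> H; try case: H; lia.
have {}a_b : a < 0 \/ b < 0 by case/orP: a_b; [left | right].
have summand k : k \in index_iota 1 N.+1 -> (k != i) && (k != j) ->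
    0 <= pair_summand i j a b k (u k%:Z) /\
    (pair_summand i j a b k (u k%:Z) = 0 <->
     ((k < i)%N -> ~ (- b < u k%:Z /\ u k%:Z < a) /\ ~ (- a < u k%:Z /\ u k%:Z < b)) /\
     ((i < k)%N -> (k < j)%N -> ~ (- a < u k%:Z /\ u k%:Z < b))).
  move=> k_in /[dup] kij /andP[ki kj]; have [xa xNa xb xNb] := other k k_in kij.
  exact: pair_summand_mixed.
have S0 := @psum_eq0_seq _ _ _ (fun k k_in kij => proj1 (summand k k_in kij)).
rewrite -/S in S0.
have D1 : 2 * ind (0 < a) + 2 * ind (0 < b) - 3 + 2 * ind (0 < a + b) = 1.
  by rewrite /ind; repeat case: ifP; lia.
rewrite D1 in D; split=> [len_succ | [_ _ before between]].
  have /S0 S_0 : S = 0 by lia.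
  have cond k k_in kij := proj1 (proj2 (summand k k_in kij)) (S_0 k k_in kij).
  have k_in k : (1 <= k)%N -> (k < j)%N -> k \in index_iota 1 N.+1.
    by move=> *; rewrite mem_index_iota; lia.
  split=> // [k k_ge1 k_lt | k ik kj].
    by apply: (proj1 (cond k (k_in k k_ge1 _) _)); lia.
  by apply: (proj2 (cond k (k_in k _ kj) _)); lia.
suff : S = 0 by lia.
apply/S0 => k k_in kij; apply: (proj2 (proj2 (summand k k_in kij))); split; last exact: between.
by move=> k_lt; apply: before => //; move: k_in; rewrite mem_index_iota; lia.
Qed.

End PairLength.

Lemma lenZ_pair_succ_sym u N (i j : nat) : inBinf u -> supp_bound N u ->
  (1 <= i <= N)%N -> (1 <= j <= N)%N -> i != j ->
  0 < u i%:Z + u j%:Z -> u i%:Z < 0 \/ u j%:Z < 0 ->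
  (forall p : nat, (1 <= p)%N -> p != i -> p != j ->
     - u i%:Z < u p%:Z -> u p%:Z < u j%:Z -> (j < p)%N) ->
  (forall p : nat, (1 <= p)%N -> p != i -> p != j ->
     - u j%:Z < u p%:Z -> u p%:Z < u i%:Z -> (i < p)%N) ->
  lenZ N (u \o t_pair i%:Z j%:Z) = lenZ N u + 1.
Proof.
move=> Hu HN.
wlog ij : i j / (i < j)%N => [sym i_in j_in ij|].
  case: (ltngtP i j) => [lt_ij|ji|eq_ij]; [exact: sym | | by rewrite eq_ij eqxx in ij].
  rewrite (eq_lenZ N (fun x => congr1 u (t_pairC _ _ _ x))); try lia.
  move=> ab a_b no_ij no_ji; apply: sym => //; try lia.
  - by move=> p p_ge1 pj pi; apply: no_ji.
  - by move=> p p_ge1 pj pi; apply: no_ij.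
move=> i_in j_in _ ab a_b no_ij no_ji.
apply/(lenZ_pair_succ Hu HN) => //; try lia; split=> //.
  move=> k k_ge1 k_lt; split=> -[k_lo k_hi].
    by have := no_ji k k_ge1 (_ : k != i) (_ : k != j) k_lo k_hi; lia.
  by have := no_ij k k_ge1 (_ : k != i) (_ : k != j) k_lo k_hi; lia.
move=> k ik kj [k_lo k_hi].
by have := no_ij k (_ : (1 <= k)%N) (_ : k != i) (_ : k != j) k_lo k_hi; lia.
Qed.

Definition bruhat0_crit (u w : int -> int) :=
  (forall i : int, 0 < i -> w i <= u i) /\
  (forall i j : int, 0 < i -> i < j -> u i < u j -> w i < w j).

Lemma bruhat0_crit_refl u : bruhat0_crit u u.
Proof. by split=> *; lia. Qed.

Lemma bruhat0_crit_trans u v w : bruhat0_crit u v -> bruhat0_crit v w -> bruhat0_crit u w.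
Proof.
move=> [uv1 uv2] [vw1 vw2]; split=> [i i_gt0 | i j i_gt0 ij uij].
  by apply: le_trans (vw1 i i_gt0) (uv1 i i_gt0).
by apply: vw2 => //; apply: uv2.
Qed.

Section CoverCriterion.

Variables (u : int -> int) (N : nat).
Hypotheses (Hu : inBinf u) (HN : supp_bound N u).

Lemma lenZ_refl_succ_crit (j : int) : 0 < j -> j <= N%:Z ->
  lenZ N (u \o t_refl j) = lenZ N u + 1 -> bruhat0_crit u (u \o t_refl j).
Proof.
move=> j_gt0 j_le; rewrite -[j]gtz0_abs //.
move/(lenZ_refl_succ Hu HN (_ : (1 <= absz j <= N)%N)) => [|a_gt0 no_mid]; first by lia.
rewrite gtz0_abs // in a_gt0 no_mid *.
have vj : (u \o t_refl j) j = - u j by rewrite /= t_refl_id (inBinf_odd Hu).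
have v_off p : 0 < p -> p != j -> (u \o t_refl j) p = u p.
  by move=> p_gt0 pj; rewrite /= t_refl_fix //; lia.
split=> [p p_gt0 | p q p_gt0 pq upq].
  by case: (eqVneq p j) => [->|pj]; rewrite ?vj ?v_off //; lia.
have q_gt0 : 0 < q by lia.
case: (eqVneq p j) => [pj|pj]; case: (eqVneq q j) => [qj|qj].
- lia.
- by rewrite pj vj v_off //; rewrite pj in upq; lia.
- (* [u p] lies outside [(-u j, u j)] since [p < j], hence below [-u j]. *)
  rewrite qj vj v_off //; rewrite qj in upq pq.
  have [_ upNj] := inBinf_neq_pm Hu p_gt0 j_gt0 pj.
  have := no_mid (absz p) (_ : (1 <= absz p)%N) (_ : (absz p < absz j)%N).
  by rewrite gez0_abs; lia.
- by rewrite !v_off.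
Qed.

Lemma lenZ_pair_succ_crit (i j : int) : 0 < i -> i < j -> j <= N%:Z ->
  lenZ N (u \o t_pair i j) = lenZ N u + 1 -> bruhat0_crit u (u \o t_pair i j).
Proof.
move=> i_gt0 ij j_le; have j_gt0 : 0 < j by lia.
have ij' : i != j by lia.
rewrite -[i]gtz0_abs // -[j]gtz0_abs //.
move/(lenZ_pair_succ Hu HN (_ : (1 <= absz i)%N) (_ : (absz i < absz j)%N) (_ : (absz j <= N)%N)).
case=> [||| ab_gt0 a_b before between]; try lia.
rewrite !gtz0_abs // in ab_gt0 a_b before between *.
have vi : (u \o t_pair i j) i = - u j by rewrite /= t_pair_l // (inBinf_odd Hu).
have vj : (u \o t_pair i j) j = - u i by rewrite /= t_pair_r // (inBinf_odd Hu).
have v_off p : 0 < p -> p != i -> p != j -> (u \o t_pair i j) p = u p.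
  by move=> p_gt0 pi pj; rewrite /= t_pair_fix //; lia.
have [ab aNb] := inBinf_neq_pm Hu i_gt0 j_gt0 ij'.
split=> [p p_gt0 | p q p_gt0 pq upq].
  case: (eqVneq p i) => [->|pi]; first by rewrite vi; lia.
  by case: (eqVneq p j) => [->|pj]; rewrite ?vj ?v_off //; lia.
have q_gt0 : 0 < q by lia.
have pos x : 0 < x -> (1 <= absz x)%N by lia.
case: (eqVneq p i) => [pi|pi]; case: (eqVneq q i) => [qi|qi];
  case: (eqVneq p j) => [pj|pj]; case: (eqVneq q j) => [qj|qj]; try lia.
- by rewrite pi qj vi vj; rewrite pi qj in upq; lia.
- by rewrite pi vi v_off //; rewrite pi in upq; lia.
- rewrite qi vi v_off //; rewrite qi in upq pq.
  have [_ upNj] := inBinf_neq_pm Hu p_gt0 j_gt0 pj.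
  have p_lt : (absz p < absz i)%N by lia.
  by have := before _ (pos p p_gt0) p_lt; rewrite gtz0_abs //; lia.
- by rewrite pj vj v_off //; rewrite pj in upq; lia.
- rewrite qj vj v_off //; rewrite qj in upq pq.
  have [_ upNi] := inBinf_neq_pm Hu p_gt0 i_gt0 pi.
  case: (ltrP p i) => [p_lt|p_gt].
    have {}p_lt : (absz p < absz i)%N by lia.
    by have := before _ (pos p p_gt0) p_lt; rewrite gtz0_abs //; lia.
  have ip : (absz i < absz p)%N by lia.
  have pj' : (absz p < absz j)%N by lia.
  by have := between _ ip pj'; rewrite gtz0_abs //; lia.
- by rewrite !v_off.
Qed.

End CoverCriterion.

Lemma eq_bruhat0_crit u v w : v =1 w -> bruhat0_crit u v -> bruhat0_crit u w.
Proof. by move=> vw [uv1 uv2]; split=> [i|i j]; rewrite -!vw; [apply: uv1 | apply: uv2]. Qed.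

Lemma cover0_crit u w : cover0 u w -> bruhat0_crit u w.
Proof.
case=> Hu Hw [N [HNu HNw len_succ]] quot.
have lenZ_succ : lenZ N w = lenZ N u + 1 by rewrite -!lengthNE len_succ; lia.
case: quot => [[j [j_gt0 wt]] | [i [j [i_gt0 ij wt]]]].
  apply: eq_bruhat0_crit (fsym wt) _.
  have j_le : j <= N%:Z.
    case: (lerP j N%:Z) => // j_gt; have := wt j.
    by rewrite /= t_refl_id (inBinf_odd Hu) !(HNu j) ?(HNw j) //; lia.
  by apply: (lenZ_refl_succ_crit Hu HNu) => //; rewrite -(eq_lenZ N wt) lenZ_succ.
apply: eq_bruhat0_crit (fsym wt) _.
have j_le : j <= N%:Z.
  case: (lerP j N%:Z) => // j_gt; have := wt j.
  rewrite /= t_pair_r ?(inBinf_odd Hu) ?(HNw j); try lia.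
  have := inBinf_bounded Hu (p := i) HNu.
  case: (lerP i N%:Z) => i_le; last rewrite HNu; lia.
by apply: (lenZ_pair_succ_crit Hu HNu) => //; rewrite -(eq_lenZ N wt) lenZ_succ.
Qed.

Lemma exists_argmin (P : pred nat) (f : nat -> int) (s : seq nat) : has P s ->
  exists2 k, k \in s & P k /\ forall k', k' \in s -> P k' -> f k <= f k'.
Proof.
elim: s => //= x s IH; case: (boolP (has P s)) => [/IH [k ks [Pk k_min]] _ | /hasPn noP].
  case: (boolP (P x && (f x < f k))) => [/andP[Px fxk] | not_x].
    exists x; first exact: mem_head.
    split=> // k'; rewrite in_cons => /orP[/eqP-> // | k's Pk'].
    by have := k_min k' k's Pk'; lia.
  exists k; first by rewrite in_cons ks orbT.
  split=> // k'; rewrite in_cons => /orP[/eqP-> Px | k's]; last exact: k_min.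
  by move: not_x; rewrite Px /= -leNgt.
rewrite orbF => Px; exists x; first exact: mem_head.
by split=> // k'; rewrite in_cons => /orP[/eqP-> // | /noP/negbTE->].
Qed.

Lemma exists_argmin_pos N (P : pred int) (f : int -> int) :
  (forall p, N%:Z < p -> ~~ P p) -> (exists2 p, 0 < p & P p) ->
  exists j : nat, [/\ (1 <= j <= N)%N, P j%:Z & forall p, 0 < p -> P p -> f j%:Z <= f p].
Proof.
move=> P_out [p p_gt0 Pp].
have le_N q : P q -> q <= N%:Z by case: (lerP q N%:Z) => // /P_out/negP.
have /(exists_argmin (fun k : nat => f k%:Z)) [j j_mem [Pj j_min]] :
    has (fun k : nat => P k%:Z) (index_iota 1 N.+1).
  apply/hasP; exists (absz p); last by rewrite gtz0_abs.
  by have := le_N p Pp; rewrite mem_index_iota; lia.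
exists j; split=> //; first by move: j_mem; rewrite mem_index_iota; lia.
move=> q q_gt0 Pq; have := le_N q Pq; rewrite -[q]gtz0_abs // => q_le.
by apply: j_min; rewrite ?gtz0_abs // mem_index_iota; lia.
Qed.

Definition gap N (u w : int -> int) : int := \sum_(1 <= k < N.+1) (u k%:Z - w k%:Z).

Lemma gap_lt N u v w (j : nat) : (1 <= j <= N)%N ->
  (forall p : nat, (1 <= p <= N)%N -> v p%:Z <= u p%:Z) -> v j%:Z < u j%:Z ->
  gap N v w < gap N u w.
Proof.
move=> j_in vu vuj; rewrite -subr_gt0 /gap -sumrB.
have j_mem : j \in index_iota 1 N.+1 by rewrite mem_index_iota; lia.
rewrite (bigD1_seq j) ?uniq_iota1 //=.
set S := \sum_(k <- _ | _) _.
have : 0 <= S.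
  by apply: sum_ge0_seq => k; rewrite mem_index_iota => /vu; lia.
lia.
Qed.

Lemma gap_ge0 N u w : bruhat0_crit u w -> 0 <= gap N u w.
Proof.
case=> wu _; apply: sum_ge0_seq => k; rewrite mem_index_iota => k_in _.
by have := wu k%:Z; lia.
Qed.

Lemma inBinf_comp_invol u N (t : int -> int) : inBinf u -> supp_bound N u ->
  involutive t -> (forall x, t (- x) = - t x) -> (forall x, N%:Z < `|x| -> t x = x) ->
  inBinf (u \o t) /\ supp_bound N (u \o t).
Proof.
move=> Hu HN tK t_odd t_fix.
have HNt : supp_bound N (u \o t) by move=> x x_gt /=; rewrite t_fix // HN.
split=> //; split; last by exists N.
- by case: Hu => u_bij _ _; apply: bij_comp => //; exists t.
- by move=> a /=; rewrite t_odd (inBinf_odd Hu).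
Qed.

Definition descent_step N (u w v : int -> int) :=
  [/\ cover0 u v, bruhat0_crit v w, inBinf v, supp_bound N v & gap N v w < gap N u w].

Section Descent.

Variables (u w : int -> int) (N : nat).
Hypotheses (Hu : inBinf u) (Hw : inBinf w) (HNu : supp_bound N u) (HNw : supp_bound N w).
Hypothesis Huw : bruhat0_crit u w.

Lemma crit_le_nat (p : nat) : (1 <= p)%N -> w p%:Z <= u p%:Z.
Proof. by case: Huw => wu _ p_ge1; apply: wu; lia. Qed.

(* The windows of [u] and [w] at the levels [a = u j] and [c = w j] have equal sums
   ([sum_window]); position [j] contributes a surplus that only a position [k] with
   [-a < u k <= -c] and [w k <= -a] can balance. *)
Lemma exists_partner (j : nat) : (1 <= j <= N)%N -> w j%:Z < u j%:Z ->
  (forall p : nat, (1 <= p <= N)%N -> w p%:Z < u p%:Z -> u j%:Z <= u p%:Z) ->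
  exists k : nat, [/\ (1 <= k <= N)%N, - u j%:Z < u k%:Z, u k%:Z <= - w j%:Z & w k%:Z <= - u j%:Z].
Proof.
move=> j_in wuj j_min.
set a := u j%:Z in wuj j_min *; set c := w j%:Z in wuj *.
have a_neq0 : a != 0 by apply: (inBinf_neq0 Hu); lia.
have c_neq0 : c != 0 by apply: (inBinf_neq0 Hw); lia.
have a_le : `|a| <= N%:Z by apply: (inBinf_bounded Hu (p := j%:Z) HNu); lia.
have c_le : `|c| <= N%:Z by apply: (inBinf_bounded Hw (p := j%:Z) HNw); lia.
pose Q k := (ind (- a < u k%:Z) - ind (- c < u k%:Z)) - (ind (- a < w k%:Z) - ind (- c < w k%:Z)).
pose T k := ind (a <= u k%:Z) - ind (a <= w k%:Z) - ind (c <= u k%:Z) + ind (c <= w k%:Z).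
pose A k := ind [&& - a < u k%:Z, u k%:Z <= - c & w k%:Z <= - a].
have sum_QT : \sum_(1 <= k < N.+1) Q k = \sum_(1 <= k < N.+1) T k.
  apply/eqP; rewrite -subr_eq0 -sumrB.
  have -> : \sum_(1 <= k < N.+1) (Q k - T k) =
     \sum_(1 <= k < N.+1) window a (u k%:Z) - \sum_(1 <= k < N.+1) window a (w k%:Z)
     - \sum_(1 <= k < N.+1) window c (u k%:Z) + \sum_(1 <= k < N.+1) window c (w k%:Z).
    by rewrite -!sumrB -big_split /=; apply: eq_bigr => k _; rewrite /Q /T /window; ring.
  by rewrite !sum_window //; apply/eqP; ring.
have j_mem : j \in index_iota 1 N.+1 by rewrite mem_index_iota; lia.
have sum_T : 1 <= \sum_(1 <= k < N.+1) T k.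
  rewrite (bigD1_seq j) ?uniq_iota1 //=.
  have -> : T j = 1 by rewrite /T /ind -/a -/c lexx; repeat case: ifP; lia.
  rewrite -[X in X <= _]addr0 lerD2l.
  apply: sum_ge0_seq => k; rewrite mem_index_iota => k_in _.
  have wuk : w k%:Z <= u k%:Z by apply: crit_le_nat; lia.
  by have := j_min k k_in; rewrite /T /ind; repeat case: ifP; lia.
have sum_QA : \sum_(1 <= k < N.+1) Q k <= \sum_(1 <= k < N.+1) A k.
  rewrite big_seq_cond [X in _ <= X]big_seq_cond; apply: ler_sum => k /andP[].
  rewrite mem_index_iota => k_in _; have wuk : w k%:Z <= u k%:Z by apply: crit_le_nat; lia.
  by rewrite /Q /A /ind; repeat (case: ifP => /= ?); lia.
have /hasP[k k_in /and3P[k1 k2 k3]] : has (fun k => [&& - a < u k%:Z, u k%:Z <= - c & w k%:Z <= - a])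
    (index_iota 1 N.+1).
  apply/negPn/negP => /hasPn noA.
  suff : \sum_(1 <= k < N.+1) A k = 0 by lia.
  by rewrite big_seq big1 // => k /noA; rewrite /A => /negbTE ->.
by exists k; split=> //; move: k_in; rewrite mem_index_iota; lia.
Qed.

Lemma cover0_of_lenZ v : inBinf v -> supp_bound N v ->
  lenZ N v = lenZ N u + 1 -> is_reflection_quot u v -> cover0 u v.
Proof.
move=> Hv HNv len_succ quot; split=> //; exists N; split=> //.
by have := lengthNE N v; have := lengthNE N u; lia.
Qed.

Lemma descent_step_refl (j : nat) : (1 <= j <= N)%N -> 0 < u j%:Z -> w j%:Z <= - u j%:Z ->
  (forall p : int, 0 < p -> w p < u p -> u j%:Z <= u p) ->
  (forall p : int, 0 < p -> - u j%:Z < u p -> w p <= - u j%:Z -> u j%:Z <= u p) ->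
  exists v, descent_step N u w v.
Proof.
move=> j_in a_gt0 wj minD minK; case: Huw => wu w_inc.
set a := u j%:Z in a_gt0 wj minD minK.
have j_gt0 : 0 < j%:Z by lia.
have [Hv HNv] : inBinf (u \o t_refl j%:Z) /\ supp_bound N (u \o t_refl j%:Z).
  apply: inBinf_comp_invol => // [x|x|x x_gt]; rewrite /t_refl; repeat case: ifP; lia.
have vj : (u \o t_refl j%:Z) j%:Z = - a by rewrite /= t_refl_id (inBinf_odd Hu).
have v_off p : 0 < p -> p != j%:Z -> (u \o t_refl j%:Z) p = u p.
  by move=> p_gt0 pj /=; rewrite t_refl_fix //; lia.
exists (u \o t_refl j%:Z); split=> //.
- apply: cover0_of_lenZ => //; last by left; exists j%:Z.
  apply/(lenZ_refl_succ Hu HNu j_in); split=> // k k_ge1 kj [k_lo k_hi].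
  have k_gt0 : 0 < k%:Z by lia.
  have := w_inc k%:Z j%:Z k_gt0.
  by have := minD k%:Z k_gt0; lia.
- split=> [p p_gt0 | p q p_gt0 pq].
    by case: (eqVneq p j%:Z) => [->|pj]; rewrite ?vj ?v_off //; apply: wu.
  have q_gt0 : 0 < q by lia.
  case: (eqVneq p j%:Z) => [pj|pj]; case: (eqVneq q j%:Z) => [qj|qj]; try lia.
  + rewrite pj vj v_off // => a_lt.
    case: (ltrP a (u q)) => [aq|qa]; first by apply: w_inc => //; lia.
    have [uqa _] := inBinf_neq_pm Hu q_gt0 j_gt0 qj.
    case: (lerP (w q) (- a)) => [wq|]; last lia.
    by have := minK q q_gt0; lia.
  + by rewrite qj vj v_off // => up; apply: w_inc => //; lia.
  + by rewrite !v_off //; apply: w_inc.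
- apply: (@gap_lt N u _ w j) => //; last by rewrite vj; lia.
  move=> p p_in; case: (eqVneq p j) => [->|pj]; first by rewrite vj; lia.
  by rewrite v_off //; lia.
Qed.

Section PairStep.

Variables j k : nat.
Hypotheses (j_in : (1 <= j <= N)%N) (k_in : (1 <= k <= N)%N) (kj : k != j).
Local Notation a := (u j%:Z).
Local Notation b := (u k%:Z).
Local Notation v := (u \o t_pair j%:Z k%:Z).
Hypotheses (a_lt0 : a < 0) (ab : - a < b) (wk : w k%:Z <= - a) (wj : w j%:Z <= - b).
Hypothesis minD : forall p : int, 0 < p -> w p < u p -> a <= u p.
Hypothesis minK : forall p : int, 0 < p -> - a < u p -> w p <= - a -> b <= u p.

Let j_gt0 : 0 < j%:Z. Proof. lia. Qed.
Let k_gt0 : 0 < k%:Z. Proof. lia. Qed.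
Let jk : j%:Z != k%:Z. Proof. lia. Qed.

Let vj : v j%:Z = - b. Proof. by rewrite /= t_pair_l // (inBinf_odd Hu). Qed.
Let vk : v k%:Z = - a. Proof. by rewrite /= t_pair_r // (inBinf_odd Hu). Qed.
Let v_off p : 0 < p -> p != j%:Z -> p != k%:Z -> v p = u p.
Proof. by move=> p_gt0 pj pk; rewrite /= t_pair_fix //; lia. Qed.

Let v_inBinf : inBinf v /\ supp_bound N v.
Proof. by apply: inBinf_comp_invol => // [x|x|x x_gt]; rewrite /t_pair; repeat case: ifP; lia. Qed.

(* No position left of [k] (resp. [j]) has a value in [(-a, b)] (resp. [(-b, a)]),
   which is what makes [t_pair j k] a cover. *)
Let right_k p : 0 < p -> p != j%:Z -> p != k%:Z -> - a < u p -> u p < b -> k%:Z < p.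
Proof.
move=> p_gt0 pj pk p_lo p_hi; have [_ w_inc] := Huw.
case: (lerP (w p) (- a)) => [wp | wp]; first by have := minK p_gt0 p_lo wp; lia.
case: (ltrP p k%:Z) => [pk' | //]; last lia.
by have := w_inc p k%:Z p_gt0 pk' p_hi; lia.
Qed.

Let right_j p : 0 < p -> p != j%:Z -> p != k%:Z -> - b < u p -> u p < a -> j%:Z < p.
Proof.
move=> p_gt0 pj pk p_lo p_hi; have [wu w_inc] := Huw; have := wu p p_gt0.
case: (ltrP (w p) (u p)) => [wp | pw]; first by have := minD p_gt0 wp; lia.
case: (ltrP p j%:Z) => [pj' | //]; last lia.
by have := w_inc p j%:Z p_gt0 pj' p_hi; lia.
Qed.

Let pair_step_cover : cover0 u v.
Proof.
have [Hv HNv] := v_inBinf; apply: cover0_of_lenZ => //.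
  apply: lenZ_pair_succ_sym => //; try lia.
    by move=> p p_ge1 pj pk p_lo p_hi; have := right_k (p := p%:Z); lia.
  by move=> p p_ge1 pk pj p_lo p_hi; have := right_j (p := p%:Z); lia.
case: (ltngtP j k) => [jk' | kj' | /eqP]; last by rewrite eq_sym (negbTE kj).
  by right; exists j%:Z, k%:Z; split=> //; lia.
right; exists k%:Z, j%:Z; split; [lia | lia | move=> x].
by rewrite /= t_pairC.
Qed.

Let pair_step_crit : bruhat0_crit v w.
Proof.
have [wu w_inc] := Huw.
split=> [p p_gt0 | p q p_gt0 pq].
  case: (eqVneq p j%:Z) => [->|pj]; first by rewrite vj; lia.
  by case: (eqVneq p k%:Z) => [->|pk]; rewrite ?vk ?v_off //; apply: wu.
have q_gt0 : 0 < q by lia.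
case: (eqVneq p j%:Z) => [pj|pj]; case: (eqVneq q j%:Z) => [qj|qj];
  case: (eqVneq p k%:Z) => [pk|pk]; case: (eqVneq q k%:Z) => [qk|qk]; try lia.
- by rewrite pj qk vj vk => _; apply: w_inc; lia.
- rewrite pj vj v_off // => vq.
  case: (lerP (w q) (- b)) => [wq|]; last lia.
  have [uqa _] := inBinf_neq_pm Hu q_gt0 j_gt0 qj.
  have aq : a < u q by have := minD q_gt0; lia.
  by apply: w_inc => //; lia.
- by rewrite pk qj vk vj; lia.
- by rewrite qj vj v_off // => up; apply: w_inc => //; lia.
- rewrite pk vk v_off // => vq.
  case: (lerP (w q) (- a)) => [wq|]; last lia.
  have [uqb _] := inBinf_neq_pm Hu q_gt0 k_gt0 qk.
  have bq : b < u q by have := minK q_gt0 vq wq; lia.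
  by apply: w_inc => //; lia.
- by rewrite qk vk v_off // => up; apply: w_inc => //; lia.
- by rewrite !v_off //; apply: w_inc.
Qed.

Lemma descent_step_pair : exists v, descent_step N u w v.
Proof.
have [Hv HNv] := v_inBinf.
exists v; split; [exact: pair_step_cover | exact: pair_step_crit | exact: Hv | exact: HNv |].
apply: (@gap_lt N u v w j) => //; last by rewrite vj; lia.
move=> p p_in; case: (eqVneq p j) => [->|pj]; first by rewrite vj; lia.
case: (eqVneq p k) => [->|pk]; first by rewrite vk; lia.
by rewrite v_off //; lia.
Qed.

End PairStep.

Lemma exists_descent_step : has (fun p : nat => u p%:Z != w p%:Z) (index_iota 1 N.+1) ->
  exists v, descent_step N u w v.
Proof.
move=> neq_uw; have [wu _] := Huw.
have [j [j_in wuj minD]] : exists j : nat, [/\ (1 <= j <= N)%N, w j%:Z < u j%:Z &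
    forall p, 0 < p -> w p < u p -> u j%:Z <= u p].
  apply: exists_argmin_pos => [p p_gt | ]; first by rewrite HNu ?HNw ?ltxx; lia.
  case/hasP: neq_uw => p; rewrite mem_index_iota => p_in upw; exists p%:Z; first lia.
  by have := wu p%:Z; lia.
have a_le : `|u j%:Z| <= N%:Z by apply: (inBinf_bounded Hu HNu); lia.
have [k' [k'_in k'_lo k'_hi k'_w]] : exists k : nat,
    [/\ (1 <= k <= N)%N, - u j%:Z < u k%:Z, u k%:Z <= - w j%:Z & w k%:Z <= - u j%:Z].
  by apply: exists_partner => // p p_in; apply: minD; lia.
have [k [k_in /andP[k_lo k_w] minK]] : exists k : nat,
    [/\ (1 <= k <= N)%N, (- u j%:Z < u k%:Z) && (w k%:Z <= - u j%:Z) &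
     forall p, 0 < p -> (- u j%:Z < u p) && (w p <= - u j%:Z) -> u k%:Z <= u p].
  apply: exists_argmin_pos => [p p_gt | ]; first by rewrite HNw; lia.
  by exists k'%:Z; rewrite ?k'_lo ?k'_w //; lia.
have b_le : u k%:Z <= - w j%:Z.
  by apply: le_trans (minK k'%:Z _ _) k'_hi; rewrite ?k'_lo ?k'_w //; lia.
have j_gt0 : 0 < j%:Z by lia.
have k_gt0 : 0 < k%:Z by lia.
case: (eqVneq k j) => [kj | kj].
  rewrite kj in k_lo k_w minK; apply: (descent_step_refl j_in) => //; first lia.
  by move=> p p_gt0 p_lo p_w; apply: minK; rewrite ?p_lo.
have [ab aNb] : u k%:Z != u j%:Z /\ u k%:Z != - u j%:Z by apply: (inBinf_neq_pm Hu); lia.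
have ab_lt : u j%:Z < u k%:Z by have := minD k%:Z k_gt0; lia.
have a_lt0 : u j%:Z < 0.
  have : u j%:Z != 0 by apply: (inBinf_neq0 Hu); lia.
  case: (ltrP (u j%:Z) 0) => // a_ge0 a_neq0.
  have Pj : (- u j%:Z < u j%:Z) && (w j%:Z <= - u j%:Z) by apply/andP; split; lia.
  by have := minK j%:Z j_gt0 Pj; lia.
apply: (descent_step_pair j_in k_in kj) => //; try lia.
by move=> p p_gt0 p_lo p_w; apply: minK; rewrite ?p_lo.
Qed.

End Descent.

Lemma bruhat0_crit_of_bruhat0 u w : bruhat0 u w -> bruhat0_crit u w.
Proof.
elim=> [{}u {}w uw | {}u v {}w _ IH /cover0_crit vw].
  exact: eq_bruhat0_crit uw (bruhat0_crit_refl u).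
exact: bruhat0_crit_trans IH vw.
Qed.

Lemma bruhat0_cons u v w : cover0 u v -> bruhat0 v w -> bruhat0 u w.
Proof.
move=> uv vw; elim: vw u uv => [{}v {}w /functional_extensionality <- | {}v x {}w _ IH xw] u uv.
  exact: bruhat0_step (bruhat0_refl (frefl u)) uv.
exact: bruhat0_step (IH u uv) xw.
Qed.

Lemma inBinf_eqfun u w N : inBinf u -> inBinf w -> supp_bound N u -> supp_bound N w ->
  (forall p : nat, (1 <= p <= N)%N -> u p%:Z = w p%:Z) -> u =1 w.
Proof.
move=> Hu Hw HNu HNw uw x; case: (ltrP N%:Z `|x|) => [x_gt | x_le]; first by rewrite HNu ?HNw.
case: (ltrgtP x 0) => [x_lt0 | x_gt0 | ->]; last by rewrite !inBinf0.
  by rewrite -[x]opprK -[- x]gez0_abs ?(inBinf_odd Hu) ?(inBinf_odd Hw) ?uw //; lia.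
by rewrite -[x]gez0_abs ?uw //; lia.
Qed.

Lemma bruhat0_of_crit w N : inBinf w -> supp_bound N w ->
  forall u, inBinf u -> supp_bound N u -> bruhat0_crit u w -> bruhat0 u w.
Proof.
move=> Hw HNw u Hu HNu Huw; move: {2}(absz (gap N u w)).+1 (ltnSn (absz (gap N u w))) => n.
elim: n u Hu HNu Huw => // n IH u Hu HNu Huw gap_lt.
case: (boolP (has (fun p : nat => u p%:Z != w p%:Z) (index_iota 1 N.+1))) => [neq | /hasPn eq].
  have [v [uv Hvw Hv HNv gap_vu]] := exists_descent_step Hu Hw HNu HNw Huw neq.
  by apply: (bruhat0_cons uv); apply: IH => //; have := gap_ge0 N Hvw; lia.
apply/bruhat0_refl/(inBinf_eqfun Hu Hw HNu HNw) => p p_in.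
have p_mem : p \in index_iota 1 N.+1 by rewrite mem_index_iota; lia.
by move: (eq p p_mem); rewrite negbK => /eqP.
Qed.

Lemma supp_bound_le N M f : (N <= M)%N -> supp_bound N f -> supp_bound M f.
Proof. by move=> NM fN a a_gt; apply: fN; lia. Qed.

Unset Implicit Arguments.

Theorem proposition2p3 (u w : int -> int) :
  inBinf u -> inBinf w ->
  (bruhat0 u w <->
   ((forall i : int, 0 < i -> w i <= u i) /\
    (forall i j : int, 0 < i -> i < j -> u i < u j -> w i < w j))).
Proof.
move=> Hu Hw; split; first exact: bruhat0_crit_of_bruhat0.
move=> Huw; have [_ _ [Nu HNu]] := Hu; have [_ _ [Nw HNw]] := Hw.
pose N := maxn Nu Nw.
have HNu' : supp_bound N u by apply: supp_bound_le HNu; lia.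
have HNw' : supp_bound N w by apply: supp_bound_le HNw; lia.
exact: (bruhat0_of_crit Hw HNw' Hu HNu' Huw).
Qed.
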